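(* Let $\Gamma_M$ ($M>0$) be a family of nonatomic routing games with a single OD pair with demand $M$, sharing the same graph, path set $\mathcal P$ and edge costs $(c_e)_{e\in\mathcal E}$. Suppose there exists a path $p\in\mathcal P$ with bounded costs, i.e. $\lim_{x\to\infty}c_e(x)<\infty$ for all $e\in p$. Then $\mathrm{PoA}(\Gamma_M)\to 1$ as $M\to\infty$.
   Context: A nonatomic routing game with a single OD pair consists of a finite directed multigraph with edge set $\mathcal E$, a nonempty finite set $\mathcal P$ of paths from an origin to a destination, a demand $M>0$, and continuous nondecreasing edge costs $c_e:[0,\infty)\to[0,\infty)$. Feasible flows: $f\in\mathbb R_+^{\mathcal P}$ with $\sum_p f_p=M$; loads $x_e=\sum_{p\ni e}f_p$; path costs $c_p(f)=\sum_{e\in p}c_e(x_e)$. A Wardrop equilibrium is a feasible $f^*$ with $c_p(f^* )\le c_{p'}(f^* )$ whenever $f^*_p>0$. Social cost $L(x)=\sum_e x_ec_e(x_e)$; $\mathrm{Opt}$ is its minimum over feasible loads, $\mathrm{Eq}=L(x^* )$ at an equilibrium load, and $\mathrm{PoA}=\mathrm{Eq}/\mathrm{Opt}$; it is assumed throughout that $\mathrm{Opt}>0$ (otherwise $\mathrm{PoA}:=1$). *)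

From HB Require Import structures.
From mathcomp Require Import all_boot all_order all_algebra.
From mathcomp Require Import all_classical all_reals all_analysis.
Set Implicit Arguments. Unset Strict Implicit. Unset Printing Implicit Defensive.
Import Order.TTheory GRing.Theory Num.Theory.
Local Open Scope ring_scope.

Section Routing.
Variables (R : realType) (V E P : finType).
Variables (src dst : E -> V) (o d : V).

(* A (simple) o-d path in the directed multigraph (V, E, src, dst):
   a nonempty edge sequence e1 ... ek with src e1 = o, dst e_i = src e_(i+1),
   dst ek = d, and pairwise distinct visited vertices o, dst e1, ..., dst ek. *)
Definition is_od_path (s : seq E) : bool :=
  [&& s != [::],
      map src s == belast o (map dst s),
      last o (map dst s) == d &
      uniq (o :: map dst s)].

Variable pe : P -> seq E.
Variable c : E -> R -> R.

Definition load (f : P -> R) (e : E) : R := \sum_(p : P | e \in pe p) f p.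

Definition path_cost (f : P -> R) (p : P) : R := \sum_(e <- pe p) c e (load f e).

Definition social_cost (f : P -> R) : R := \sum_(e : E) load f e * c e (load f e).

Definition feasible (M : R) (f : P -> R) : Prop :=
  (forall p, 0 <= f p) /\ \sum_(p : P) f p = M.

Definition wardrop_eq (M : R) (f : P -> R) : Prop :=
  feasible M f /\ forall p p', 0 < f p -> path_cost f p <= path_cost f p'.

Definition social_opt (M : R) (f : P -> R) : Prop :=
  feasible M f /\ forall g, feasible M g -> social_cost f <= social_cost g.

(* PoA = Eq / Opt, with the convention PoA := 1 when Opt = 0 *)
Definition poa_ratio (eq opt : R) : R := if opt == 0 then 1 else eq / opt.

End Routing.

From HB Require Import structures.
From mathcomp Require Import all_boot all_order all_algebra.
From mathcomp Require Import all_classical all_reals all_analysis.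
From mathcomp Require Import ring lra.

Set Implicit Arguments.
Unset Strict Implicit.
Unset Printing Implicit Defensive.
Import Order.TTheory GRing.Theory Num.Theory numFieldNormedType.Exports.
Local Open Scope classical_set_scope.
Local Open Scope ring_scope.

(* Let L be the least saturation cost sup_x sum_(e in p) c_e(x) over all
   paths p; it is finite because some path has bounded costs.  In a Wardrop
   equilibrium every used path costs at most the cost of a minimizer of L, so
   Eq <= M L.  Conversely, for any C < L there is a load K beyond which every
   path whose edges all carry load >= K costs more than C; since the other
   paths carry flow at most K each, Opt >= (M - |P| K) C.  Hence
   Eq / Opt <= (M / (M - |P| K)) (L / C), which is close to 1 for C close to L
   and M large. *)

Section NondecreasingFunctions.
Variable R : realType.

Lemma nondecreasing_le_lim (f : R -> R) (l x : R) :
  (forall y z, 0 <= y -> y <= z -> f y <= f z) -> 0 <= x ->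
  f y @[y --> +oo] --> l -> f x <= l.
Proof.
move=> f_nd x_ge0 fl; rewrite -(cvg_lim _ fl) //; apply: limr_ge; first exact: cvgP fl.
by near=> y; apply: f_nd => //; near: y; apply: nbhs_pinfty_ge; rewrite num_real.
Unshelve. all: end_near.
Qed.

Lemma finite_min_sup (I : finType) (f : I -> R -> R) (i0 : I) (B : R) :
    (forall x, 0 <= x -> f i0 x <= B) ->
  exists L i1, (forall x, 0 <= x -> f i1 x <= L) /\
               (forall i C, C < L -> exists2 x, 0 <= x & C < f i x).
Proof.
move=> f_i0_le.
pose img i := [set f i x | x in [set x : R | 0 <= x]].
pose bounded i := `[< has_ubound (img i) >].
have has_sup_img i : bounded i -> has_sup (img i).
  by move=> /asboolP img_ub; split => //; exists (f i 0), 0; rewrite /= ?lexx.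
have bounded_i0 : bounded i0 by apply/asboolP; exists B => _ [x x_ge0 <-]; exact: f_i0_le.
have [i1 bounded_i1 min_i1] := arg_minP (fun i => sup (img i)) bounded_i0.
exists (sup (img i1)), i1; split=> [x x_ge0|i C C_lt].
  by apply: (sup_upper_bound (has_sup_img _ bounded_i1)); exists x.
have [bounded_i|unbounded_i] := boolP (bounded i).
  have gap : 0 < sup (img i) - C by rewrite subr_gt0 (lt_le_trans C_lt) ?min_i1.
  have [_ [x x_ge0 <-]] := sup_adherent gap (has_sup_img _ bounded_i).
  by rewrite opprB addrCA subrr addr0; exists x.
apply: contrapT => no_x; move/asboolPn: unbounded_i; apply; exists C => _ [x x_ge0 <-].
by rewrite leNgt; apply/negP => C_lt_fx; apply: no_x; exists x.
Qed.

Lemma finite_nondecreasing_gt (I : finType) (f : I -> R -> R) (C : R) :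
    (forall i x y, 0 <= x -> x <= y -> f i x <= f i y) ->
    (forall i, exists2 x, 0 <= x & C < f i x) ->
  exists2 K, 0 <= K & forall i, C < f i K.
Proof.
move=> f_nd f_gt.
have f_gt_near i : \forall y \near +oo, C < f i y.
  have [x x_ge0 C_lt] := f_gt i; near=> y; apply: lt_le_trans C_lt (f_nd _ _ _ x_ge0 _).
  by near: y; apply: nbhs_pinfty_ge; rewrite num_real.
have [K [K_ge0 C_lt]] :=
  filter_ex (filterI (nbhs_pinfty_ge (num_real 0)) (filter_forall _ f_gt_near)).
by exists K.
Unshelve. all: end_near.
Qed.

End NondecreasingFunctions.

Lemma linear_ratio_slack (R : realFieldType) (L eps : R) : 0 < L -> 0 < eps ->
  exists2 C, 0 < C < L & forall A M, 0 <= A -> A * (1 + 2 / eps) < M ->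
    0 < (M - A) * C /\ M * L < (1 + eps) * ((M - A) * C).
Proof.
move=> L_gt0 eps_gt0; have eps1_gt0 : 0 < 1 + eps by rewrite addr_gt0.
(* (1 + eps) C = (1 + eps / 2) L: the factor 1 + eps / 2 absorbs M / (M - A). *)
exists (L * (1 + eps / 2) / (1 + eps)).
  by rewrite divr_gt0 ?mulr_gt0 ?addr_gt0 ?divr_gt0 //= ltr_pdivrMr // ltr_pM2l //; lra.
move=> A M A_ge0 M_gt.
have A_le : A <= A * (1 + 2 / eps) by rewrite ler_peMr // lerDl divr_ge0 ?ltW.
have M_eps : A * (2 + eps) < M * eps.
  have -> : A * (2 + eps) = A * (1 + 2 / eps) * eps by field; rewrite gt_eqF.
  by rewrite ltr_pM2r.
have A_lt_M : A < M := le_lt_trans A_le M_gt.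
split; first by rewrite mulr_gt0 ?subr_gt0 // divr_gt0 // mulr_gt0 // addr_gt0 // divr_gt0.
have -> : (1 + eps) * ((M - A) * (L * (1 + eps / 2) / (1 + eps))) =
          ((1 + eps / 2) * (M - A)) * L by field; rewrite gt_eqF.
by rewrite ltr_pM2r //; lra.
Qed.

Lemma poa_ratio_lt (R : realType) (eqc optc eps : R) :
  0 < optc -> optc <= eqc -> eqc < (1 + eps) * optc -> `|poa_ratio eqc optc - 1| < eps.
Proof.
move=> optc_gt0 optc_le eqc_lt; rewrite /poa_ratio gt_eqF //.
rewrite ger0_norm; last by rewrite subr_ge0 ler_pdivlMr ?mul1r.
by rewrite ltrBlDr ltr_pdivrMr // addrC.
Qed.

Lemma od_path_uniq (V E : finType) (src dst : E -> V) (o d : V) (s : seq E) :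
  is_od_path src dst o d s -> uniq s.
Proof. by case/and4P => _ _ _ /= /andP[_ /map_uniq]. Qed.

Section RoutingCosts.
Variables (R : realType) (E P : finType) (pe : P -> seq E) (c : E -> R -> R).
Hypothesis pe_uniq : forall p, uniq (pe p).
Hypothesis c_nd : forall e x y, 0 <= x -> x <= y -> c e x <= c e y.
Hypothesis c_ge0 : forall e x, 0 <= x -> 0 <= c e x.

Definition uniform_path_cost (p : P) (x : R) : R := \sum_(e <- pe p) c e x.

Lemma ler_sum_cost (s : seq E) (x y : E -> R) :
    (forall e, e \in s -> 0 <= x e <= y e) ->
  \sum_(e <- s) c e (x e) <= \sum_(e <- s) c e (y e).
Proof.
move=> xy; rewrite big_seq [leRHS]big_seq; apply: ler_sum => e /xy /andP[x_ge0 x_le].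
exact: c_nd.
Qed.

Lemma uniform_path_cost_nd (p : P) (x y : R) :
  0 <= x -> x <= y -> uniform_path_cost p x <= uniform_path_cost p y.
Proof. by move=> x_ge0 x_le; apply: ler_sum_cost => e _; rewrite x_ge0. Qed.

Lemma uniform_path_cost_ge0 (p : P) (x : R) : 0 <= x -> 0 <= uniform_path_cost p x.
Proof. by move=> x_ge0; apply: sumr_ge0 => e _; apply: c_ge0. Qed.

Lemma uniform_path_cost_bounded (p : P) :
    (forall e, e \in pe p -> exists l : R, c e x @[x --> +oo] --> l) ->
  exists B, forall x, 0 <= x -> uniform_path_cost p x <= B.
Proof.
rewrite /uniform_path_cost; elim: (pe p) => [_|e s IH c_cvg].
  by exists 0 => x _; rewrite big_nil.
have [l cl] := c_cvg e (mem_head e s).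
have [B sum_le] : exists B, forall x, 0 <= x -> \sum_(e <- s) c e x <= B.
  by apply: IH => e' e'_s; apply: c_cvg; rewrite in_cons e'_s orbT.
exists (l + B) => x x_ge0; rewrite big_cons lerD ?sum_le //.
exact: nondecreasing_le_lim (c_nd e) x_ge0 cl.
Qed.

Section Flows.
Variable f : P -> R.
Hypothesis f_ge0 : forall p, 0 <= f p.

Lemma load_ge0 (e : E) : 0 <= load pe f e.
Proof. exact: sumr_ge0. Qed.

Lemma flow_le_load (p : P) (e : E) : e \in pe p -> f p <= load pe f e.
Proof.
by move=> e_p; rewrite /load (bigD1 p) //= lerDl sumr_ge0.
Qed.

Lemma path_cost_ge0 (p : P) : 0 <= path_cost pe c f p.
Proof. by apply: sumr_ge0 => e _; apply/c_ge0/load_ge0. Qed.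

Lemma social_costE : social_cost pe c f = \sum_p f p * path_cost pe c f p.
Proof.
rewrite /social_cost /path_cost.
under eq_bigr => e _ do rewrite {1}/load mulr_suml big_mkcond.
rewrite exchange_big; apply: eq_bigr => p _.
rewrite [in RHS]big_uniq // mulr_sumr [RHS]big_mkcond; apply: eq_bigr => e _.
by case: ifP.
Qed.

Lemma social_cost_ge0 : 0 <= social_cost pe c f.
Proof.
by rewrite social_costE; apply: sumr_ge0 => p _; rewrite mulr_ge0 ?path_cost_ge0.
Qed.

Lemma uniform_le_path_cost (p : P) (x : R) :
    0 <= x -> (forall e, e \in pe p -> x <= load pe f e) ->
  uniform_path_cost p x <= path_cost pe c f p.
Proof. by move=> x_ge0 x_le; apply: ler_sum_cost => e /x_le ->; rewrite x_ge0. Qed.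

End Flows.

Lemma demand_ge0 (M : R) (f : P -> R) : feasible M f -> 0 <= M.
Proof. by move=> [f_ge0 <-]; apply: sumr_ge0. Qed.

Lemma path_cost_le_uniform (M : R) (f : P -> R) (p : P) :
  feasible M f -> path_cost pe c f p <= uniform_path_cost p M.
Proof.
move=> [f_ge0 sum_f]; apply: ler_sum_cost => e _; rewrite load_ge0 //= -sum_f.
by rewrite /load [leRHS](bigID (fun q => e \in pe q)) /= lerDl sumr_ge0.
Qed.

Lemma wardrop_social_cost_le (M : R) (f : P -> R) (q : P) :
  wardrop_eq pe c M f -> social_cost pe c f <= M * path_cost pe c f q.
Proof.
move=> [[f_ge0 sum_f] f_eq]; rewrite social_costE // -sum_f mulr_suml.
apply: ler_sum => p _; have := f_ge0 p; rewrite le_eqVlt => /predU1P[<-|fp_gt0].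
  by rewrite !mul0r.
by rewrite ler_wpM2l ?f_eq ?ltW.
Qed.

Lemma wardrop_social_cost_le_sup (M L : R) (f : P -> R) (q : P) :
    (forall x, 0 <= x -> uniform_path_cost q x <= L) ->
  wardrop_eq pe c M f -> social_cost pe c f <= M * L.
Proof.
move=> q_le f_eq; have M_ge0 := demand_ge0 f_eq.1.
apply: le_trans (wardrop_social_cost_le q f_eq) _; rewrite ler_wpM2l //.
exact: le_trans (path_cost_le_uniform q f_eq.1) (q_le _ M_ge0).
Qed.

Lemma social_cost_ge_saturated (M : R) (f : P -> R) (K C : R) :
    feasible M f -> 0 <= K -> 0 <= C -> (forall p, C <= uniform_path_cost p K) ->
  (M - #|P|%:R * K) * C <= social_cost pe c f.
Proof.
move=> [f_ge0 sum_f] K_ge0 C_ge0 C_le.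
pose heavy p := all (fun e => K <= load pe f e) (pe p).
have light_le : \sum_(p | ~~ heavy p) f p <= #|P|%:R * K.
  apply: (@le_trans _ _ (\sum_(p : P) K)); last by rewrite sumr_const mulr_natl.
  rewrite big_mkcond; apply: ler_sum => p _; case: ifP => // /allPn[e e_p]; rewrite -ltNge => /ltW.
  exact/le_trans/flow_le_load.
rewrite social_costE // (bigID heavy) /=.
apply: (@le_trans _ _ (\sum_(p | heavy p) f p * C)); last first.
  rewrite -[leLHS]addr0; apply: lerD.
    apply: ler_sum => p /allP heavy_p; rewrite ler_wpM2l //.
    exact: le_trans (C_le p) (uniform_le_path_cost K_ge0 heavy_p).
  by apply: sumr_ge0 => p _; rewrite mulr_ge0 ?path_cost_ge0.
rewrite -mulr_suml ler_wpM2r //.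
by move: sum_f; rewrite (bigID heavy) /=; lra.
Qed.

End RoutingCosts.

Theorem corollary4p7 (R : realType) (V E P : finType)
    (src dst : E -> V) (o d : V) (pe : P -> seq E) (c : E -> R -> R)
    (Hpaths : forall p, is_od_path src dst o d (pe p))
    (Hcont : forall e, {within [set x : R | 0 <= x], continuous (c e)})
    (Hmono : forall e x y, 0 <= x -> x <= y -> c e x <= c e y)
    (Hnneg : forall e x, 0 <= x -> 0 <= c e x)
    (Hbounded : exists p0 : P, forall e, e \in pe p0 ->
        exists l : R, c e x @[x --> +oo] --> l) :
  forall eps : R, 0 < eps -> exists M0 : R, forall M : R, M0 < M ->
    forall fe fo : P -> R,
      wardrop_eq pe c M fe -> social_opt pe c M fo ->
      `| poa_ratio (social_cost pe c fe) (social_cost pe c fo) - 1 | < eps.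
Proof.
move=> eps eps_gt0.
have pe_uniq p := od_path_uniq (Hpaths p).
have [p0 /(uniform_path_cost_bounded Hmono)[B p0_le_B]] := Hbounded.
have [L [ps [ps_le_L L_le]]] := finite_min_sup p0_le_B.
have wardrop_le M fe : wardrop_eq pe c M fe -> social_cost pe c fe <= M * L :=
  wardrop_social_cost_le_sup pe_uniq Hmono ps_le_L.
have := le_trans (uniform_path_cost_ge0 pe Hnneg ps (lexx 0)) (ps_le_L _ (lexx 0)).
rewrite le_eqVlt => /predU1P[L0|L_gt0].
  exists 0 => M _ fe fo fe_eq [fo_feas fo_opt].
  suff -> : social_cost pe c fo = 0 by rewrite /poa_ratio eqxx subrr normr0.
  apply: le_anti; rewrite (social_cost_ge0 pe_uniq Hnneg fo_feas.1) andbT -(mulr0 M) L0.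
  exact: le_trans (fo_opt _ fe_eq.1) (wardrop_le _ _ fe_eq).
have [C /andP[C_gt0 C_lt_L] C_slack] := linear_ratio_slack L_gt0 eps_gt0.
have [K K_ge0 K_sat] :=
  finite_nondecreasing_gt (uniform_path_cost_nd pe Hmono) (fun p => L_le p C C_lt_L).
pose A := #|P|%:R * K.
exists (A * (1 + 2 / eps)) => M M_gt fe fo fe_eq [fo_feas fo_opt].
have [opt_lb_gt0 eq_lt] := C_slack A M (mulr_ge0 (ler0n _ _) K_ge0) M_gt.
have opt_ge : (M - A) * C <= social_cost pe c fo :=
  social_cost_ge_saturated pe_uniq Hmono Hnneg fo_feas K_ge0 (ltW C_gt0)
    (fun p => ltW (K_sat p)).
apply: poa_ratio_lt (lt_le_trans opt_lb_gt0 opt_ge) (fo_opt _ fe_eq.1) _.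
apply: le_lt_trans (wardrop_le _ _ fe_eq) (lt_le_trans eq_lt _).
by rewrite ler_wpM2l // addr_ge0 // ltW.
Qed.
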